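(* Let $\Lambda$ be a left-artinian ring, $\mathcal{C}=\mathrm{mod}(\Lambda)$, and let $\alpha,\beta$ be pre-radicals on $\mathcal{C}$ such that $\alpha^2=\alpha$ and $q_\beta$ preserves monomorphisms. Then $\ell\ell^\alpha(M)\leq\ell\ell_{q_\beta}(M)$ for every $M\in\mathcal{C}$ if and only if $\mathcal{T}_\beta\subseteq\mathcal{F}_\alpha$.
   Context: $\mathcal{C}$ is the category of finitely generated left $\Lambda$-modules; $\mathrm{rad}$, $\mathrm{soc}$ are the radical and socle functors. A pre-radical is an additive subfunctor $\alpha$ of the identity; $q_\alpha:=\mathrm{Id}/\alpha$. $\mathcal{F}_\alpha=\{M:\alpha(M)=0\}$, $\mathcal{T}_\alpha=\{M:\alpha(M)=M\}$. For an additive functor $\gamma$, $F_\gamma=\mathrm{rad}\circ\gamma$, $G_\gamma=\gamma/(\mathrm{soc}\circ\gamma)$, $\ell\ell^\gamma(M)=\min\{i\geq0:\gamma\circ F_\gamma^{\,i}(M)=0\}$ and $\ell\ell_\gamma(M)=\min\{i\geq0:\gamma\circ G_\gamma^{\,i}(M)=0\}$ (with $\min\emptyset=\infty$). *)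

From HB Require Import structures.
From mathcomp Require Import all_boot all_algebra.
From mathcomp Require Import boolp.

Set Implicit Arguments.
Unset Strict Implicit.
Unset Printing Implicit Defensive.

Import GRing.Theory.
Local Open Scope ring_scope.
Local Open Scope quotient_scope.

Section Submodules.
Variable R : pzRingType.

Definition is_submod (M : lmodType R) (S : pred M) : Prop :=
  [/\ S 0, (forall x y, S x -> S y -> S (x + y)) & (forall (a : R) x, S x -> S (a *: x))].

Definition genmod (M : lmodType R) (S : pred M) : pred M :=
  fun x => `[< forall T : pred M, is_submod T -> (forall y, S y -> T y) -> T x >].

Lemma genmod_submod (M : lmodType R) (S : pred M) : is_submod (genmod S).
Proof.
split.
- by apply/asboolP => T [T0 _ _] _.
- move=> x y /asboolP Hx /asboolP Hy; apply/asboolP => T HT ST.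
  by case: (HT) => _ TD _; apply: TD; [apply: Hx | apply: Hy].
- move=> a x /asboolP Hx; apply/asboolP => T HT ST.
  by case: (HT) => _ _ TZ; apply: TZ; apply: Hx.
Qed.

Lemma genmod_id (M : lmodType R) (S : pred M) x : S x -> genmod S x.
Proof. by move=> Sx; apply/asboolP => T _ ST; apply: ST. Qed.

Lemma genmodN (M : lmodType R) (S : pred M) x : genmod S x -> genmod S (- x).
Proof.
case: (genmod_submod S) => _ _ GZ Gx.
by rewrite -scaleN1r; apply: GZ.
Qed.

Section SubModule.
Variables (M : lmodType R) (S : pred M).
Let G := genmod S.

Definition subT := {x : M | G x}.
HB.instance Definition _ := Choice.copy subT {x : M | G x}.

Lemma subT_inj (u v : subT) : sval u = sval v -> u = v.
Proof.
case: u => x Hx; case: v => y Hy /= exy; subst y.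
by rewrite (bool_irrelevance Hx Hy).
Qed.

Definition sub0 : subT := exist _ 0 (let: And3 h _ _ := genmod_submod S in h).
Definition subadd (u v : subT) : subT :=
  exist _ (sval u + sval v)
    (let: And3 _ h _ := genmod_submod S in h _ _ (svalP u) (svalP v)).
Definition subopp (u : subT) : subT := exist _ (- sval u) (genmodN (svalP u)).
Definition subscale (a : R) (u : subT) : subT :=
  exist _ (a *: sval u) (let: And3 _ _ h := genmod_submod S in h a _ (svalP u)).

Lemma subaddA : associative subadd.
Proof. by move=> u v w; apply: subT_inj; rewrite /= addrA. Qed.
Lemma subaddC : commutative subadd.
Proof. by move=> u v; apply: subT_inj; rewrite /= addrC. Qed.
Lemma subadd0 : left_id sub0 subadd.
Proof. by move=> u; apply: subT_inj; rewrite /= add0r. Qed.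
Lemma subaddN : left_inverse sub0 subopp subadd.
Proof. by move=> u; apply: subT_inj; rewrite /= addNr. Qed.

HB.instance Definition _ := GRing.isZmodule.Build subT subaddA subaddC subadd0 subaddN.

Lemma subscaleA a b (u : subT) : subscale a (subscale b u) = subscale (a * b) u.
Proof. by apply: subT_inj; rewrite /= scalerA. Qed.
Lemma subscale1 : left_id 1 subscale.
Proof. by move=> u; apply: subT_inj; rewrite /= scale1r. Qed.
Lemma subscaleDr : right_distributive subscale +%R.
Proof. by move=> a u v; apply: subT_inj; rewrite /= scalerDr. Qed.
Lemma subscaleDl (u : subT) : {morph subscale^~ u : a b / a + b}.
Proof. by move=> a b; apply: subT_inj; rewrite /= scalerDl. Qed.

HB.instance Definition _ :=
  GRing.Zmodule_isLmodule.Build R subT subscaleA subscale1 subscaleDr subscaleDl.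

End SubModule.

Section QuotModule.
Variables (M : lmodType R) (S : pred M).
Let G := genmod S.

Definition qrel : rel M := fun x y => G (x - y).

Lemma qrel_refl : reflexive qrel.
Proof. by move=> x; rewrite /qrel subrr; case: (genmod_submod S). Qed.
Lemma qrel_sym : symmetric qrel.
Proof.
move=> x y; apply/idP/idP => H; by rewrite /qrel -opprB; apply: genmodN.
Qed.
Lemma qrel_trans : transitive qrel.
Proof.
move=> y x z Hxy Hyz; rewrite /qrel.
have -> : x - z = (x - y) + (y - z) by rewrite addrA subrK.
by case: (genmod_submod S) => _ GD _; apply: GD.
Qed.

Canonical qrel_equiv := EquivRel qrel qrel_refl qrel_sym qrel_trans.

Definition quotT := {eq_quot qrel_equiv}.
HB.instance Definition _ := Choice.copy quotT {eq_quot qrel_equiv}.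

Definition qpi (x : M) : quotT := \pi_{eq_quot qrel_equiv} x.
Definition qrepr (u : quotT) : M := repr (u : {eq_quot qrel_equiv}).

Lemma qreprK : cancel qrepr qpi.
Proof. exact: reprK. Qed.

Lemma qpiP x y : reflect (qpi x = qpi y) (G (x - y)).
Proof. exact: eqmodP. Qed.

Lemma qW (P : quotT -> Prop) : (forall x, P (qpi x)) -> forall u, P u.
Proof. by move=> H u; rewrite -(qreprK u); apply: H. Qed.

Lemma qrepr_pi x : G (qrepr (qpi x) - x).
Proof. by apply/qpiP; rewrite qreprK. Qed.

Definition q0 : quotT := qpi 0.
Definition qadd (u v : quotT) : quotT := qpi (qrepr u + qrepr v).
Definition qopp (u : quotT) : quotT := qpi (- qrepr u).
Definition qscale (a : R) (u : quotT) : quotT := qpi (a *: qrepr u).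

Lemma qaddE x y : qadd (qpi x) (qpi y) = qpi (x + y).
Proof.
apply/qpiP.
have -> : qrepr (qpi x) + qrepr (qpi y) - (x + y)
        = (qrepr (qpi x) - x) + (qrepr (qpi y) - y) by rewrite opprD addrACA.
by case: (genmod_submod S) => _ GD _; apply: GD; apply: qrepr_pi.
Qed.
Lemma qoppE x : qopp (qpi x) = qpi (- x).
Proof.
apply/qpiP; rewrite -opprD; apply: genmodN; exact: qrepr_pi.
Qed.
Lemma qscaleE a x : qscale a (qpi x) = qpi (a *: x).
Proof.
apply/qpiP; rewrite -scalerBr.
by case: (genmod_submod S) => _ _ GZ; apply: GZ; apply: qrepr_pi.
Qed.

Lemma qaddA : associative qadd.
Proof.
by elim/qW=> x; elim/qW=> y; elim/qW=> z; rewrite !qaddE addrA.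
Qed.
Lemma qaddC : commutative qadd.
Proof. by elim/qW=> x; elim/qW=> y; rewrite !qaddE addrC. Qed.
Lemma qadd0 : left_id q0 qadd.
Proof. by elim/qW=> x; rewrite /q0 qaddE add0r. Qed.
Lemma qaddN : left_inverse q0 qopp qadd.
Proof. by elim/qW=> x; rewrite qoppE qaddE addNr. Qed.

HB.instance Definition _ := GRing.isZmodule.Build quotT qaddA qaddC qadd0 qaddN.

Lemma qscaleA a b (u : quotT) : qscale a (qscale b u) = qscale (a * b) u.
Proof. by elim/qW: u => x; rewrite !qscaleE scalerA. Qed.
Lemma qscale1 : left_id 1 qscale.
Proof. by elim/qW=> x; rewrite qscaleE scale1r. Qed.
Lemma qscaleDr : right_distributive qscale +%R.
Proof.
move=> a; elim/qW=> x; elim/qW=> y.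
by rewrite [qpi x + _]qaddE !qscaleE scalerDr -qaddE.
Qed.
Lemma qscaleDl (u : quotT) : {morph qscale^~ u : a b / a + b}.
Proof.
by move=> a b; elim/qW: u => x; rewrite !qscaleE scalerDl -qaddE.
Qed.

HB.instance Definition _ :=
  GRing.Zmodule_isLmodule.Build R quotT qscaleA qscale1 qscaleDr qscaleDl.

End QuotModule.

End Submodules.

(* Modules as objects: M ranges over lmodType R; mod(Lambda) = the f.g. ones *)

Section Preradicals.
Variable R : pzRingType.

Definition subL (M : lmodType R) (S : pred M) : lmodType R := subT S.
Definition quotL (M : lmodType R) (S : pred M) : lmodType R := quotT S.

Definition fg (M : lmodType R) : Prop :=
  exists s : seq M, forall x : M,
    exists c : 'I_(size s) -> R, x = \sum_(i < size s) c i *: s`_i.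

(* left-artinian ring: DCC on left ideals (= submodules of the regular
   left module R^o) *)
Definition left_artinian : Prop :=
  forall I : nat -> pred R^o,
    (forall n, is_submod (I n)) ->
    (forall n x, I n.+1 x -> I n x) ->
    exists n, forall m, (n <= m)%N -> forall x, I m x = I n x.

(* A pre-radical on C = mod(R): a subfunctor of the identity of C.  Its
   action on a morphism f is the restriction of f (so additivity is
   automatic). *)
Definition preradical (a : forall M : lmodType R, pred M) : Prop :=
  (forall M : lmodType R, fg M -> is_submod (a M)) /\
  (forall M N : lmodType R, fg M -> fg N ->
     forall (f : {linear M -> N}) (x : M), a M x -> a N (f x)).

(* alpha^2 = alpha : alpha(alpha(M)) = alpha(M) for all M in C *)
Definition pr_idempotent (a : forall M : lmodType R, pred M) : Prop :=
  forall M : lmodType R, fg M ->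
    forall x : subL (a M), a (subL (a M)) x.

Definition qobj (b : forall M : lmodType R, pred M) (M : lmodType R) :
  lmodType R := quotL (b M).
Definition qmap (b : forall M : lmodType R, pred M) (M N : lmodType R)
  (f : {linear M -> N}) : qobj b M -> qobj b N :=
  fun u => qpi (b N) (f (qrepr u)).
Arguments qmap b {M N} f.

Definition q_preserves_mono (b : forall M : lmodType R, pred M) : Prop :=
  forall M N : lmodType R, fg M -> fg N ->
    forall f : {linear M -> N}, injective f -> injective (qmap b f).

Definition maximal_sub (M : lmodType R) (N : pred M) : Prop :=
  [/\ is_submod N, (exists x, ~~ N x) &
      forall N' : pred M, is_submod N' -> (forall x, N x -> N' x) ->
        (exists x, ~~ N' x) -> forall x, N' x -> N x].
Definition rad (M : lmodType R) : pred M :=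
  fun x => `[< forall N : pred M, maximal_sub N -> N x >].
Arguments rad : clear implicits.

Definition simple_sub (M : lmodType R) (N : pred M) : Prop :=
  [/\ is_submod N, (exists x, N x /\ x != 0) &
      forall N' : pred M, is_submod N' -> (forall x, N' x -> N x) ->
        (forall x, N' x -> x = 0) \/ (forall x, N x -> N' x)].
Definition soc (M : lmodType R) : pred M :=
  genmod (fun x => `[< exists N : pred M, simple_sub N /\ N x >]).
Arguments soc : clear implicits.

Definition Fobj (a : forall M : lmodType R, pred M) (M : lmodType R) :
  lmodType R := subL (rad (subL (a M))).
Definition Gobj (b : forall M : lmodType R, pred M) (M : lmodType R) :
  lmodType R := quotL (soc (qobj b M)).

(* N u {oo} : None stands for infinity *)
Definition natinf := option nat.
Definition leinf (m n : natinf) : Prop :=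
  match n with
  | None => True
  | Some n' => match m with Some m' => (m' <= n')%N | None => False end
  end.

Lemma ex_asbool_nat (P : nat -> Prop) :
  (exists n, P n) -> exists n, (fun k => `[< P k >]) n.
Proof. by case=> n Pn; exists n; apply/asboolP. Qed.

Definition natinf_min (P : nat -> Prop) : natinf :=
  match pselect (exists n, P n) with
  | left h => Some (ex_minn (ex_asbool_nat h))
  | right _ => None
  end.

Definition ll_up (a : forall M : lmodType R, pred M) (M : lmodType R) : natinf :=
  natinf_min (fun i => forall x, a (iter i (Fobj a) M) x -> x = 0).

Definition ll_low_q (b : forall M : lmodType R, pred M) (M : lmodType R) : natinf :=
  natinf_min (fun i => forall u : qobj b (iter i (Gobj b) M), u = 0).

Definition in_T (b : forall M : lmodType R, pred M) (M : lmodType R) : Prop :=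
  fg M /\ forall x : M, b M x.
Definition in_F (a : forall M : lmodType R, pred M) (M : lmodType R) : Prop :=
  fg M /\ forall x : M, a M x -> x = 0.

End Preradicals.

(* First, Hopkins-Levitzki: over a left artinian ring the
   Jacobson radical J is a finite intersection of maximal left ideals and is
   nilpotent, and a left ideal killed by J modulo a smaller one is finitely
   spanned modulo it (it is semisimple); filtering by the powers of J, every
   left ideal is finitely generated.  Hence submodules of finitely generated
   modules are finitely generated, and F_alpha and G_(q_beta) stay in C.
   Second, assume T_beta is contained in F_alpha and q_beta(G^n M) = 0; by
   induction on i, the composite F^i M -> M -> G^(n-i) M kills alpha(F^i M).
   Indeed, if f : X -> Y maps alpha X into the socle of q_beta Y, then it maps
   F X = rad (alpha X) into beta Y, since maps into semisimple modules kill
   radicals; as q_beta preserves monomorphisms, beta is hereditary, so the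
   image of F X lies in T_beta, hence in F_alpha, and f kills alpha (F X).
   For i = n this gives ll^alpha M <= n.  Conversely, a module in T_beta has
   ll_(q_beta) = 0, so alpha vanishes on it. *)

From Pilot Require Import Defs.
From HB Require Import structures.
From mathcomp Require Import all_boot all_algebra.
From mathcomp Require Import boolp classical_sets.

Set Implicit Arguments.
Unset Strict Implicit.
Unset Printing Implicit Defensive.

Import GRing.Theory.
Local Open Scope ring_scope.

Section Zorn.
Local Open Scope classical_set_scope.

Lemma zorn_pred (T : Type) (Phi : pred T -> Prop) (Q0 : pred T) :
  Phi Q0 ->
  (forall C : pred T -> Prop, (exists Q, C Q) -> (forall Q, C Q -> Phi Q) ->
     (forall Q1 Q2, C Q1 -> C Q2 -> subpred Q1 Q2 \/ subpred Q2 Q1) ->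
     Phi (fun x => `[< exists Q, C Q /\ Q x >])) ->
  exists Q, [/\ Phi Q, subpred Q0 Q &
    forall Q', Phi Q' -> subpred Q Q' -> subpred Q' Q].
Proof.
move=> PhiQ0 Phi_union.
pose P (A : set T) := A = set0 \/
  exists Q, [/\ Phi Q, subpred Q0 Q & A = [set x | Q x]].
have [F F_P F_tot|A [PA Amax]] := @Zorn_bigcup T P.
  have [[B [FB /set0P[b Bb]]]|F0] := pselect (exists B, F B /\ B != set0); last first.
    left; apply/seteqP; split=> // x [B FB Bx]; apply: F0; exists B.
    by split=> //; apply/set0P; exists x.
  right; pose C Q := [/\ Phi Q, subpred Q0 Q & F [set x | Q x]].
  have CB : exists Q, C Q.
    case: (F_P _ FB) => [B0|[Q [PhiQ Q0Q eB]]]; first by rewrite B0 in Bb.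
    by exists Q; split=> //; rewrite -eB.
  exists (fun x => `[< exists Q, C Q /\ Q x >]); split.
  - apply: Phi_union => //; first by move=> Q [].
    move=> Q1 Q2 [_ _ F1] [_ _ F2].
    by case: (F_tot _ _ F1 F2) => h; [left | right] => x hx; apply: h.
  - case: CB => Q [PhiQ Q0Q FQ] x Q0x; apply/asboolP; exists Q; split=> //.
    exact: Q0Q.
  - apply/seteqP; split=> x.
      move=> [B' FB' B'x]; apply/asboolP.
      case: (F_P _ FB') => [B0|[Q [PhiQ Q0Q eB]]]; first by rewrite B0 in B'x.
      by exists Q; split; [split=> //; rewrite -eB | rewrite eB in B'x].
    by move=> /= /asboolP[Q [[_ _ FQ] Qx]]; exists [set x | Q x].
have notP Q' : Phi Q' -> subpred Q0 Q' -> ~ A `<` [set x | Q' x].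
  by move=> PhiQ' Q0Q' AQ'; apply: (Amax _ AQ'); right; exists Q'.
case: PA => [A0|[Q [PhiQ Q0Q eA]]].
  have Q0_empty Q' : Phi Q' -> subpred Q0 Q' -> forall x, ~~ Q' x.
    move=> PhiQ' Q0Q' x; apply/negP => Q'x; apply: (notP _ PhiQ' Q0Q').
    by rewrite A0; split=> [y //|/(_ x Q'x)].
  exists Q0; split=> // Q' PhiQ' Q0Q' x Q'x.
  by case/negP: (Q0_empty _ PhiQ' Q0Q' x).
exists Q; split=> // Q' PhiQ' QQ' x Q'x; apply/negPn/negP => Qx.
apply: (notP Q' PhiQ' (fun y Q0y => QQ' y (Q0Q y Q0y))).
rewrite eA; split; first by move=> y; apply: QQ'.
by move=> /(_ x Q'x); apply/negP.
Qed.

End Zorn.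

Section Submodules.
Variable R : pzRingType.

Section Closure.
Variables (M : lmodType R) (S : pred M).
Hypothesis S_submod : is_submod S.

Lemma submod0 : S 0. Proof. by case: S_submod. Qed.
Lemma submodD x y : S x -> S y -> S (x + y). Proof. by case: S_submod => _ + _; apply. Qed.
Lemma submodZ a x : S x -> S (a *: x). Proof. by case: S_submod => _ _; apply. Qed.
Lemma submodN x : S x -> S (- x). Proof. by rewrite -scaleN1r; apply: submodZ. Qed.
Lemma submodB x y : S x -> S y -> S (x - y).
Proof. by move=> Sx /submodN; apply: submodD. Qed.
End Closure.

Lemma genmod_min (M : lmodType R) (S T : pred M) :
  is_submod T -> subpred S T -> subpred (genmod S) T.
Proof. by move=> HT ST x /asboolP; apply. Qed.

Lemma genmodE (M : lmodType R) (S : pred M) x : is_submod S -> genmod S x = S x.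
Proof. by move=> HS; apply/idP/idP; [apply: genmod_min | apply: genmod_id]. Qed.

Lemma pred1_0_submod (M : lmodType R) : is_submod (pred1 (0 : M)).
Proof. by split=> [|x y /eqP-> /eqP->|a x /eqP->]; rewrite /= ?addr0 ?scaler0. Qed.

Lemma submodI (M : lmodType R) (S T : pred M) :
  is_submod S -> is_submod T -> is_submod (predI S T).
Proof.
move=> HS HT; split=> /=.
- by rewrite (submod0 HS) (submod0 HT).
- by move=> x y /andP[Sx Tx] /andP[Sy Ty]; rewrite (submodD HS) ?(submodD HT).
- by move=> a x /andP[Sx Tx]; rewrite (submodZ HS) ?(submodZ HT).
Qed.

Lemma submod_preim (M N : lmodType R) (f : {linear M -> N}) (S : pred N) :
  is_submod S -> is_submod (preim f S).
Proof.
move=> HS; split=> /=.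
- by rewrite linear0 (submod0 HS).
- by move=> x y Sx Sy; rewrite linearD (submodD HS).
- by move=> a x Sx; rewrite linearZ (submodZ HS).
Qed.

Definition imsub (M N : lmodType R) (f : M -> N) (S : pred M) : pred N :=
  fun y => `[< exists2 x, S x & y = f x >].

Lemma imsub_submod (M N : lmodType R) (f : {linear M -> N}) (S : pred M) :
  is_submod S -> is_submod (imsub f S).
Proof.
move=> HS; split.
- by apply/asboolP; exists 0; rewrite ?linear0 ?(submod0 HS).
- move=> _ _ /asboolP[x Sx ->] /asboolP[y Sy ->]; apply/asboolP.
  by exists (x + y); rewrite ?linearD ?(submodD HS).
- move=> a _ /asboolP[x Sx ->]; apply/asboolP.
  by exists (a *: x); rewrite ?linearZ ?(submodZ HS).
Qed.

Lemma imsub_img (M N : lmodType R) (f : M -> N) (S : pred M) x :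
  S x -> imsub f S (f x).
Proof. by move=> Sx; apply/asboolP; exists x. Qed.

Definition addsub (M : lmodType R) (S T : pred M) : pred M :=
  fun x => `[< exists s t, [/\ S s, T t & x = s + t] >].

Section Addsub.
Variables (M : lmodType R) (S T : pred M).
Hypotheses (HS : is_submod S) (HT : is_submod T).

Lemma addsub_submod : is_submod (addsub S T).
Proof.
split.
- by apply/asboolP; exists 0, 0; rewrite addr0 (submod0 HS) (submod0 HT).
- move=> _ _ /asboolP[s1 [t1 [S1 T1 ->]]] /asboolP[s2 [t2 [S2 T2 ->]]].
  by apply/asboolP; exists (s1 + s2), (t1 + t2); rewrite addrACA (submodD HS) ?(submodD HT).
- move=> a _ /asboolP[s [t [Ss Tt ->]]]; apply/asboolP.
  by exists (a *: s), (a *: t); rewrite scalerDr (submodZ HS) ?(submodZ HT).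
Qed.

Lemma addsub_intro s t : S s -> T t -> addsub S T (s + t).
Proof. by move=> Ss Tt; apply/asboolP; exists s, t. Qed.

Lemma addsubl : subpred S (addsub S T).
Proof. by move=> s Ss; rewrite -[s]addr0; apply: addsub_intro (submod0 HT). Qed.

Lemma addsubr : subpred T (addsub S T).
Proof. by move=> t Tt; rewrite -[t]add0r; apply: addsub_intro (submod0 HS) _. Qed.

Lemma addsub_min U : is_submod U -> subpred S U -> subpred T U -> subpred (addsub S T) U.
Proof. by move=> HU SU TU _ /asboolP[s [t [/SU Us /TU Ut ->]]]; apply: submodD. Qed.

End Addsub.

Definition cyclic (M : lmodType R) (v : M) : pred M := fun x => `[< exists r, x = r *: v >].

Lemma cyclic_submod (M : lmodType R) (v : M) : is_submod (cyclic v).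
Proof.
split.
- by apply/asboolP; exists 0; rewrite scale0r.
- by move=> _ _ /asboolP[r ->] /asboolP[s ->]; apply/asboolP; exists (r + s); rewrite scalerDl.
- by move=> a _ /asboolP[r ->]; apply/asboolP; exists (a * r); rewrite scalerA.
Qed.

Lemma cyclic_min (M : lmodType R) (S : pred M) (v : M) :
  is_submod S -> S v -> subpred (cyclic v) S.
Proof. by move=> HS Sv _ /asboolP[r ->]; apply: submodZ. Qed.

Lemma cyclicZ (M : lmodType R) (v : M) r : cyclic v (r *: v).
Proof. by apply/asboolP; exists r. Qed.

Lemma cyclic_id (M : lmodType R) (v : M) : cyclic v v.
Proof. by apply/asboolP; exists 1; rewrite scale1r. Qed.

Definition adjoin (M : lmodType R) (S : pred M) (v : M) := addsub S (cyclic v).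

Lemma adjoinP (M : lmodType R) (S : pred M) (v w : M) :
  adjoin S v w -> exists q r, S q /\ w = q + r *: v.
Proof. by case/asboolP=> q [_ [Sq /asboolP[r ->] ->]]; exists q, r. Qed.

Lemma adjoinl (M : lmodType R) (S : pred M) (v : M) : subpred S (adjoin S v).
Proof. exact: addsubl (cyclic_submod v). Qed.

Lemma adjoin_intro (M : lmodType R) (S : pred M) (v q : M) r :
  S q -> adjoin S v (q + r *: v).
Proof. by move=> Sq; apply: addsub_intro (cyclicZ _ _). Qed.

Lemma chain_submod (M : lmodType R) (C : pred M -> Prop) :
  (exists Q, C Q) -> (forall Q, C Q -> is_submod Q) ->
  (forall Q1 Q2, C Q1 -> C Q2 -> subpred Q1 Q2 \/ subpred Q2 Q1) ->
  is_submod (fun x => `[< exists Q, C Q /\ Q x >]).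
Proof.
move=> [Q1 CQ1] C_submod C_tot; split.
- by apply/asboolP; exists Q1; rewrite (submod0 (C_submod _ CQ1)).
- move=> x y /asboolP[Qx [CQx Qxx]] /asboolP[Qy [CQy Qyy]]; apply/asboolP.
  case: (C_tot _ _ CQx CQy) => [xy | yx].
    by exists Qy; split; last apply: (submodD (C_submod _ CQy)) (xy _ _) _.
  by exists Qx; split; last apply: (submodD (C_submod _ CQx)) _ (yx _ _).
- move=> a x /asboolP[Q [CQ Qx]]; apply/asboolP.
  by exists Q; split; last apply: (submodZ (C_submod _ CQ)).
Qed.

Lemma submod_max_avoid (M : lmodType R) (S Q0 : pred M) (y : M) :
  is_submod Q0 -> subpred Q0 S -> ~~ Q0 y ->
  exists Q, [/\ is_submod Q, subpred Q0 Q, subpred Q S, ~~ Q y &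
    forall Q', is_submod Q' -> subpred Q Q' -> subpred Q' S -> ~~ Q' y ->
      subpred Q' Q].
Proof.
move=> HQ0 Q0S Q0y.
pose Phi Q := [/\ is_submod Q, subpred Q S & ~~ Q y].
have [|C [Q1 CQ1] C_Phi C_tot|Q [[HQ QS Qy] Q0Q Qmax]] := @zorn_pred M Phi Q0.
- by split.
- split; first by apply: chain_submod => [|Q /C_Phi[]|]; first exists Q1.
    by move=> x /asboolP[Q [/C_Phi[_ QS _] /QS]].
  by apply/negP => /asboolP[Q [/C_Phi[_ _ /negP]]].
- by exists Q; split=> // Q' HQ' QQ' Q'S Q'y; apply: Qmax.
Qed.

End Submodules.

Section Spans.
Variable R : pzRingType.

Definition mklin (M N : lmodType R) (f : M -> N) (f_lin : linear f) : {linear M -> N} :=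
  HB.pack f (GRing.isLinear.Build R M N *:%R f f_lin).

Lemma qpi_linear (M : lmodType R) (S : pred M) : linear (qpi S).
Proof. by move=> a x y; rewrite -qaddE -qscaleE. Qed.

HB.instance Definition _ (M : lmodType R) (S : pred M) :=
  GRing.isLinear.Build R M (quotL S) *:%R (qpi S) (qpi_linear S).

Lemma qpi_eq0 (M : lmodType R) (S : pred M) x : is_submod S -> qpi S x = 0 <-> S x.
Proof.
move=> HS; rewrite -(linear0 (qpi S)) -(genmodE _ HS) -[x in genmod S x]subr0.
by split=> [/qpiP | /qpiP].
Qed.

Fixpoint lspan (M : lmodType R) (s : seq M) : pred M :=
  if s is m :: s' then fun x => `[< exists r y, lspan s' y /\ x = r *: m + y >]
  else fun x => x == 0.

Lemma lspan_submod (M : lmodType R) (s : seq M) : is_submod (lspan s).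
Proof.
elim: s => [|m s IH] /=.
  by split=> [|x y /eqP-> /eqP->|a x /eqP->]; rewrite ?addr0 ?scaler0.
split.
- by apply/asboolP; exists 0, 0; rewrite scale0r addr0 (submod0 IH).
- move=> _ _ /asboolP[r1 [y1 [H1 ->]]] /asboolP[r2 [y2 [H2 ->]]].
  apply/asboolP; exists (r1 + r2), (y1 + y2).
  by rewrite scalerDl addrACA (submodD IH).
- move=> a _ /asboolP[r [y [Hy ->]]]; apply/asboolP; exists (a * r), (a *: y).
  by rewrite scalerDr scalerA (submodZ IH).
Qed.

Lemma lspan_cons (M : lmodType R) (m : M) (s : seq M) r y :
  lspan s y -> lspan (m :: s) (r *: m + y).
Proof. by move=> Hy; apply/asboolP; exists r, y. Qed.

Lemma lspan_sumP (M : lmodType R) (s : seq M) x :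
  (exists c : 'I_(size s) -> R, x = \sum_(i < size s) c i *: s`_i) <-> lspan s x.
Proof.
elim: s x => [|m s IH] x /=.
  split; first by case=> c ->; rewrite big_ord0.
  by move/eqP->; exists (fun _ => 0); rewrite big_ord0.
split=> [[c ->]|/asboolP[r [y [/IH[c ->] ->]]]].
  rewrite big_ord_recl; apply: lspan_cons; apply/IH.
  by exists (fun i => c (lift ord0 i)).
exists (fun i => if unlift ord0 i is Some j then c j else r).
rewrite big_ord_recl /= unlift_none; congr (_ + _).
by apply: eq_bigr => i _; rewrite liftK.
Qed.

Lemma fgE (M : lmodType R) : fg M <-> exists s : seq M, forall x, lspan s x.
Proof.
by split=> -[s Hs]; exists s => x; apply/lspan_sumP.
Qed.

Lemma lspan_min (M : lmodType R) (S : pred M) (s : seq M) :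
  is_submod S -> all S s -> subpred (lspan s) S.
Proof.
move=> HS; elim: s => [|m s IH] /=; first by move=> _ x /eqP->; apply: submod0.
move=> /andP[Sm Ss] _ /asboolP[r [y [Hy ->]]].
by apply: (submodD HS); [apply: submodZ | apply: IH].
Qed.

Lemma lspan_cat (M : lmodType R) (s t : seq M) x y :
  lspan s x -> lspan t y -> lspan (s ++ t) (x + y).
Proof.
elim: s x => [x /eqP->|m s IH _ /asboolP[r [z [Hz ->]]] Hy]; first by rewrite add0r.
by rewrite -addrA; apply: lspan_cons; apply: IH.
Qed.

Lemma lspan_map (M N : lmodType R) (f : {linear M -> N}) (s : seq M) x :
  lspan s x -> lspan (map f s) (f x).
Proof.
elim: s x => [x /eqP->|m s IH _ /asboolP[r [y [Hy ->]]]] /=; first by rewrite linear0.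
by rewrite linearD linearZ; apply: lspan_cons; apply: IH.
Qed.

Lemma fg_surj (M N : lmodType R) (f : {linear M -> N}) :
  (forall y, exists x, y = f x) -> fg M -> fg N.
Proof.
move=> f_surj /fgE[s Hs]; apply/fgE; exists (map f s) => y.
by have [x ->] := f_surj y; apply: lspan_map.
Qed.

Lemma fg_quot (M : lmodType R) (S : pred M) : fg M -> fg (quotL S).
Proof. by apply: (fg_surj (f := qpi S)) => u; exists (qrepr u); rewrite /= qreprK. Qed.

Definition fin_spanned (M : lmodType R) (N : pred M) : Prop :=
  exists s : seq M, all N s /\ subpred N (lspan s).

Lemma fg_subL_fin_spanned (M : lmodType R) (N : pred M) :
  is_submod N -> fin_spanned N -> fg (subL N).
Proof.
move=> HN [s [Ns Ns_span]].
pose lift v : subL N := if pselect (genmod N v) is left Nv then exist _ v Nv else 0.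
have liftK v : N v -> sval (lift v) = v.
  by rewrite -(genmodE _ HN) /lift; case: pselect.
have lift_span v : lspan s v -> N v -> lspan (map lift s) (lift v).
  elim: s Ns {Ns_span} v => [_ v /eqP-> _|m s IH /andP[Nm Ns] _ /asboolP[r [y [Hy ->]]] Nv].
    by apply/eqP/subT_inj; rewrite liftK // (submod0 HN).
  have Ny : N y by apply: lspan_min Hy.
  rewrite [lift _](_ : _ = r *: lift m + lift y); first by apply: lspan_cons; apply: IH.
  by apply: subT_inj; rewrite /= !liftK.
apply/fgE; exists (map lift s) => u.
have Nu : N (sval u) by rewrite -(genmodE _ HN); exact: (svalP u).
have -> : u = lift (sval u) by apply: subT_inj; rewrite liftK.
exact: lift_span (Ns_span _ Nu) Nu.
Qed.

Definition left_noetherian : Prop :=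
  forall L : pred R^o, is_submod L -> fin_spanned L.

Section Noetherian.
Hypothesis noethR : left_noetherian.

Lemma span_lift_coefs (M : lmodType R) (m : M) (g : seq M) (N : pred M) rs :
  all (fun r : R^o => `[< exists2 y, lspan g y & N ((r : R) *: m + y) >]) rs ->
  exists t, all N t /\
    forall r : R^o, lspan rs r -> exists2 y, lspan g y & lspan t ((r : R) *: m + y).
Proof.
elim: rs => [_|r1 rs IH /andP[/asboolP[y1 Hy1 Ny1] /IH[t [Nt Ht]]]].
  exists [::]; split=> // r /eqP->; exists 0; first exact: submod0 (lspan_submod g).
  by apply/eqP; rewrite addr0; apply: scale0r.
exists ((r1 : R) *: m + y1 :: t); split; first by rewrite /= Ny1.
move=> _ /asboolP[c [r [Hr ->]]]; have [y Hy Hty] := Ht r Hr.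
exists (c *: y1 + y); first by rewrite (submodD (lspan_submod g)) ?(submodZ (lspan_submod g)).
rewrite [X in lspan _ X](_ : _ = c *: ((r1 : R) *: m + y1) + ((r : R) *: m + y)).
  exact: lspan_cons.
by rewrite scalerDl scalerDr scalerA addrACA.
Qed.

(* Induction on the number of generators: the coefficients of the first
   generator occurring in [N] form a left ideal, finitely generated by
   noetherianity. *)
Lemma fin_spanned_sub_span (M : lmodType R) (g : seq M) (N : pred M) :
  is_submod N -> subpred N (lspan g) -> fin_spanned N.
Proof.
elim: g N => [|m g IH] N HN Ng; first by exists [::]; split=> // x /Ng.
pose I (r : R^o) := `[< exists2 y, lspan g y & N ((r : R) *: m + y) >].
have HI : is_submod I.
  split.
  - apply/asboolP; exists 0; first exact: submod0 (lspan_submod g).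
    by rewrite scale0r addr0 (submod0 HN).
  - move=> r1 r2 /asboolP[y1 H1 N1] /asboolP[y2 H2 N2]; apply/asboolP.
    exists (y1 + y2); first by apply: (submodD (lspan_submod g)).
    by have := submodD HN N1 N2; rewrite scalerDl addrACA.
  - move=> c r /asboolP[y Hy Ny]; apply/asboolP; exists (c *: y).
      by apply: (submodZ (lspan_submod g)).
    by have := submodZ HN c Ny; rewrite scalerDr scalerA.
have [rs [Irs Irs_span]] := noethR HI.
have [t [Nt Ht]] := span_lift_coefs Irs.
have [|t' [Nt' Ht']] := IH _ (submodI HN (lspan_submod g)); first by move=> x /andP[].
exists (t' ++ t); split; first by rewrite all_cat Nt andbT; apply: sub_all Nt' => x /andP[].
move=> x Nx; have /asboolP[r [y [Hy ex]]] := Ng x Nx.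
have Ir : I r by apply/asboolP; exists y => //; rewrite ex in Nx.
have [y' Hy' Hty'] := Ht r (Irs_span r Ir).
have -> : x = (y - y') + ((r : R) *: m + y') by rewrite ex addrCA subrK.
apply: lspan_cat _ (Hty'); apply: Ht'; apply/andP; split.
  rewrite [_ - _](_ : _ = x - ((r : R) *: m + y')); last first.
    by rewrite ex opprD addrACA subrr add0r.
  by apply: (submodB HN) => //; apply: (lspan_min HN Nt).
by apply: (submodB (lspan_submod g)).
Qed.

Lemma fg_subL (M : lmodType R) (N : pred M) : fg M -> is_submod N -> fg (subL N).
Proof.
move=> /fgE[g Hg] HN; apply: fg_subL_fin_spanned (HN) _.
exact: fin_spanned_sub_span HN (fun x _ => Hg x).
Qed.

End Noetherian.

End Spans.

Section LeftArtinian.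
Variable R : pzRingType.
Hypothesis artR : left_artinian R.

Local Notation lideal L := (@is_submod R R^o L).

Lemma lidealM (L : pred R^o) a x : lideal L -> L x -> L (a * x).
Proof. by move=> HL Lx; apply: (submodZ HL a Lx). Qed.

Lemma rmul_linear (r : R) : linear (fun x : R^o => (x : R) * r : R^o).
Proof. by move=> a x y; rewrite /= mulrDl; congr (_ + _); symmetry; apply: mulrA. Qed.

Definition rmul (r : R) : {linear R^o -> R^o} := mklin (rmul_linear r).

Lemma rmulE r x : rmul r x = (x : R) * r. Proof. by []. Qed.

Lemma dcc_min (Phi : pred R^o -> Prop) :
  (forall L, Phi L -> lideal L) -> (exists L, Phi L) ->
  exists L0, Phi L0 /\ forall L, Phi L -> subpred L L0 -> subpred L0 L.
Proof.
(* Otherwise dependent choice yields a strictly descending chain. *)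
move=> Phi_lideal [L1 PhiL1]; apply/not_existsP => no_min.
have next_ex (L0 : {L | Phi L}) : exists L : {L | Phi L},
    subpred (sval L) (sval L0) /\ ~ subpred (sval L0) (sval L).
  case: L0 => L0 PhiL0; have /not_andP[//|/existsNP[L /not_implyP[PhiL]]] := no_min L0.
  by move/not_implyP=> [LL0 L0L]; exists (exist _ L PhiL).
pose next L0 := sval (cid (next_ex L0)).
pose I n := sval (iter n next (exist _ L1 PhiL1)).
have [n Hn] := artR (I := I) (fun n => Phi_lideal _ (svalP (iter n next _)))
  (fun n x => proj1 (svalP (cid (next_ex (iter n next _)))) x).
apply: (proj2 (svalP (cid (next_ex (iter n next (exist _ L1 PhiL1)))))) => x Ix.
by have := Hn n.+1 (leqnSn n) x; rewrite /I /= => ->.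
Qed.

Definition max_lideal (m : pred R^o) :=
  [/\ lideal m, ~~ m 1 & forall L, lideal L -> subpred m L -> ~~ L 1 -> subpred L m].

Lemma max_lideal_exists (L : pred R^o) :
  lideal L -> ~~ L 1 -> exists2 m, max_lideal m & subpred L m.
Proof.
move=> HL L1; have [m [Hm Lm _ m1 m_max]] := submod_max_avoid HL (fun _ _ => isT) L1.
by exists m => //; split=> // L' HL' mL' L'1; apply: m_max.
Qed.

Lemma max_lideal_adjoin m r : max_lideal m -> ~~ m r ->
  exists q t, m q /\ 1 = q + t * r.
Proof.
case=> Hm _ m_max mr; have /adjoinP[q [t [mq ->]]] : adjoin m r 1.
  have Hmr := addsub_submod Hm (cyclic_submod r).
  apply/negPn/negP => /(m_max _ Hmr (addsubl (cyclic_submod r))).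
  by move=> /(_ _ (addsubr Hm (cyclic_id r))); apply/negP.
by exists q, t.
Qed.

Lemma max_lideal_colon m r : max_lideal m -> ~~ m r -> max_lideal (preim (rmul r) m).
Proof.
move=> [Hm _ m_max] mr.
split; [exact: submod_preim | by rewrite /= ?rmulE mul1r |].
move=> L HL colL L1 l Ll; apply/negPn/negP => mlr.
have HLr := imsub_submod (rmul r) HL.
have HT := addsub_submod HLr Hm.
have T1 : addsub (imsub (rmul r) L) m 1.
  apply/negPn/negP => /(m_max _ HT (addsubr HLr)) /(_ (l * r)).
  by move=> /(_ (addsubl Hm (imsub_img _ Ll))); apply/negP.
have := lidealM r HT T1; rewrite mulr1 => /asboolP[_ [q [/asboolP[a La ->] mq er]]].
have : L (1 - a).
  by apply: colL; rewrite /= ?rmulE mulrBl mul1r {1}er ?rmulE addrAC subrr add0r.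
by move=> /(submodD HL) /(_ La); rewrite subrK; apply/negP.
Qed.

Definition interL (ms : seq (pred R^o)) : pred R^o :=
  fun r => all (fun m : pred R^o => m r) ms.

Fixpoint all_max (ms : seq (pred R^o)) : Prop :=
  if ms is m :: ms' then max_lideal m /\ all_max ms' else True.

Lemma interL_lideal ms : all_max ms -> lideal (interL ms).
Proof.
elim: ms => [_|m ms IH [[Hm _ _] /IH Hms]]; first by split.
exact: submodI Hm Hms.
Qed.

Lemma interL_all_max ms x : all_max ms -> (forall m, max_lideal m -> m x) -> interL ms x.
Proof.
elim: ms => [//|m ms IH [max_m /IH Hms] Hx].
by rewrite /interL /= (Hx _ max_m); apply: Hms.
Qed.

Lemma jacobson_exists :
  exists2 ms, all_max ms & forall m, max_lideal m -> subpred (interL ms) m.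
Proof.
have [J [[ms [Hms ->]] J_min]] :=
  @dcc_min (fun L => exists ms, all_max ms /\ L = interL ms)
    (fun L '(ex_intro ms (conj Hms eL)) => ltac:(rewrite eL; exact: interL_lideal))
    (ex_intro _ (interL [::]) (ex_intro _ [::] (conj I erefl))).
exists ms => // m max_m x Jx.
have Jmm : subpred (interL (m :: ms)) (interL ms) by move=> y /andP[].
by have /andP[] := J_min _ (ex_intro _ (m :: ms) (conj (conj max_m Hms) erefl)) Jmm x Jx.
Qed.

Section Complement.
Variables (D : pred R^o) (c : R^o).
Hypotheses (HD : lideal D) (Dc : ~~ D c)
  (D_max : forall D', lideal D' -> subpred D D' -> ~~ D' c -> subpred D' D).

Lemma adjoin_of_max_colon (a : R^o) m :
  max_lideal m -> subpred m (preim (rmul a) D) -> adjoin D c a.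
Proof.
move=> max_m m_col; have [Da|Da] := boolP (D a); first exact: adjoinl.
have HDa := addsub_submod HD (cyclic_submod a).
have /adjoinP[d [s [Dd ec]]] : adjoin D a c.
  apply/negPn/negP => /(D_max HDa (addsubl (cyclic_submod a))) /(_ a).
  by move=> /(_ (addsubr HD (cyclic_id a))); apply/negP.
have m_s : ~~ m s.
  by apply/negP => /m_col; rewrite /= ?rmulE => Dsa; case/negP: Dc; rewrite ec (submodD HD).
have [mu [t [m_mu e1]]] := max_lideal_adjoin max_m m_s.
have -> : a = (mu * a - t * d) + t *: c.
  have ec' : (c : R) = d + s * a := ec.
  have ea : (a : R) = (mu * a - t * d) + t * c.
    by rewrite ec' mulrDr addrA subrK mulrA -mulrDl -e1 mul1r.
  exact: ea.
apply: adjoin_intro; apply: (submodB HD); last exact: lidealM.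
by have := m_col _ m_mu; rewrite /= ?rmulE.
Qed.

(* Semisimplicity of modules killed by [J], via the splitting [1 = e + f]
   along two comaximal left ideals. *)
Lemma adjoin_of_interL_colon ms' (a : R^o) :
  all_max ms' -> subpred (interL ms') (preim (rmul a) D) -> adjoin D c a.
Proof.
elim: ms' a => [a _ /(_ 1 isT)|m ms' IH a [max_m max_ms'] col].
  by rewrite /= ?rmulE mul1r; apply: adjoinl.
case: (max_m) => Hm _ m_max; have Hms' := interL_lideal max_ms'.
have [T1|no1] := boolP (addsub (interL ms') m 1); last first.
  apply: IH => // r ms'r; apply: col; apply/andP; split; last exact: ms'r.
  apply: (m_max _ (addsub_submod Hms' Hm) (addsubr Hms') no1).
  exact: addsubl Hm _ ms'r.
case/asboolP: T1 => e [f [ms'e mf e1]].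
have split_r (r : R^o) : (r : R) = r * e + r * f by rewrite -mulrDr -e1 mulr1.
have -> : a = e * a + f * a by rewrite -mulrDl -e1 mul1r.
apply: (submodD (addsub_submod HD (cyclic_submod c))).
  apply: (adjoin_of_max_colon max_m) => r mr; rewrite /= ?rmulE mulrA; apply: col.
  apply/andP; split; last exact: lidealM _ Hms' ms'e.
  have -> : (r * e : R) = r - r * f by rewrite {2}(split_r r) addrK.
  by rewrite (submodB Hm) ?(lidealM _ Hm).
apply: IH => // r ms'r; rewrite /= ?rmulE mulrA; apply: col.
apply/andP; split; first exact: lidealM _ Hm mf.
have -> : (r * f : R) = r - r * e by rewrite {2}(split_r r) addrAC subrr add0r.
by apply: (submodB Hms') => //; apply: lidealM.
Qed.

End Complement.

Section Jacobson.
Variable ms : seq (pred R^o).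
Hypotheses (max_ms : all_max ms)
  (J_max : forall m, max_lideal m -> subpred (interL ms) m).
Local Notation J := (interL ms).

Lemma J_mulr j r : J j -> J (j * r).
Proof.
move=> Jj; apply: interL_all_max => // m max_m; case: (max_m) => Hm _ _.
have [mr|mr] := boolP (m r); first exact: lidealM.
by have := J_max (max_lideal_colon max_m mr) Jj.
Qed.

Lemma J_unit b : J b -> exists u, u * (1 - b) = 1.
Proof.
move=> Jb; have [/asboolP[u e]|L1] := boolP (cyclic (1 - b : R^o) 1); first by exists u.
have [m max_m Lm] := max_lideal_exists (cyclic_submod _) L1; case: (max_m) => Hm m1 _.
have mb : m b := J_max max_m Jb.
have m1b : m (1 - b) by apply: Lm; apply: cyclic_id.
by case/negP: m1; rewrite -(subrK b 1) (submodD Hm).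
Qed.

Definition lmul (A B : pred R^o) : pred R^o :=
  genmod (fun z : R^o => `[< exists a b, [/\ A a, B b & z = (a : R) * b] >]).

Lemma lmul_lideal A B : lideal (lmul A B). Proof. exact: genmod_submod. Qed.

Lemma lmul_mul (A B : pred R^o) a b : A a -> B b -> lmul A B (a * b).
Proof. by move=> Aa Bb; apply: genmod_id; apply/asboolP; exists a, b. Qed.

Definition Jpow k := iter k (lmul J) predT.

Lemma Jpow_lideal k : lideal (Jpow k).
Proof. by case: k => [|k]; [split | exact: lmul_lideal]. Qed.

Lemma Jpow_succ_sub k : subpred (Jpow k.+1) (Jpow k).
Proof.
apply: genmod_min (Jpow_lideal k) _ => _ /asboolP[j [p [_ Pp ->]]].
exact: lidealM (Jpow_lideal k) Pp.
Qed.

Lemma Jpow_sub m n : (m <= n)%N -> subpred (Jpow n) (Jpow m).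
Proof.
move/subnK<-; elim: (n - m)%N => [//|d IH] x Px.
by apply: IH; apply: Jpow_succ_sub.
Qed.

Lemma Jpow_sub_J k : subpred (Jpow k.+1) J.
Proof.
by apply: genmod_min (interL_lideal max_ms) _ => _ /asboolP[j [p [Jj _ ->]]]; apply: J_mulr.
Qed.

Lemma Jpow_add a b : subpred (Jpow (a + b)) (lmul (Jpow a) (Jpow b)).
Proof.
elim: a => [|a IH] z Pz; first by rewrite -[z]mul1r; apply: lmul_mul.
apply: genmod_min (lmul_lideal _ _) _ z Pz => _ /asboolP[j [p [Jj Pp ->]]].
pose T y := `[< forall j', J j' -> lmul (Jpow a.+1) (Jpow b) (j' * y) >].
have HT : lideal T.
  split.
  - by apply/asboolP => j' _; rewrite mulr0 (submod0 (lmul_lideal _ _)).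
  - move=> x y /asboolP Tx /asboolP Ty; apply/asboolP => j' Jj'.
    by rewrite mulrDr (submodD (lmul_lideal _ _)) ?Tx ?Ty.
  - move=> c x /asboolP Tx; apply/asboolP => j' Jj'.
    by rewrite [c *: x]/(c * x : R) mulrA Tx ?J_mulr.
have /asboolP Tp : T p.
  apply: genmod_min HT _ _ (IH _ Pp) => _ /asboolP[p1 [q1 [P1 Q1 ->]]].
  by apply/asboolP => j' Jj'; rewrite mulrA lmul_mul //; apply: lmul_mul.
exact: Tp Jj.
Qed.

(* Nakayama's argument, run on a minimal left ideal not annihilated by the
   stable power [J^k]. *)
Lemma Jpow_nil : exists k, forall x, Jpow k x -> x = 0.
Proof.
have [n Hn] := artR (fun n => Jpow_lideal n.+1) (fun n => @Jpow_succ_sub n.+1).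
pose k := n.+1.
have Pk_sq : subpred (Jpow k) (lmul (Jpow k) (Jpow k)).
  move=> x Px; apply: Jpow_add.
  by rewrite [(k + k)%N]addSn Hn // leq_addr.
exists k => a0 Pa0; apply/eqP/negPn/negP => a0_neq0.
pose Phi (L : pred R^o) := lideal L /\ exists a y, [/\ Jpow k a, L y & (a : R) * y != 0].
have [|L0 [[HL0 [a [x [Pa L0x ax]]]] L0_min]] := @dcc_min Phi (fun L => @proj1 _ _).
  by exists predT; split; [split | exists a0, 1; rewrite mulr1].
pose Lx := imsub (rmul x) (Jpow k).
have Lx_L0 : subpred Lx L0 by move=> _ /asboolP[b _ ->]; apply: lidealM.
have PhiLx : Phi Lx.
  split; first exact: imsub_submod (Jpow_lideal k).
  apply/not_existsP => no_wit.
  pose ann (z : R^o) := (z : R) * x == 0.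
  have Hann : lideal ann.
    split; rewrite /ann ?mul0r //.
      by move=> y z /eqP Hy /eqP Hz; rewrite mulrDl Hy Hz addr0.
    by move=> c y /eqP Hy; rewrite [c *: y]/(c * y : R) -mulrA Hy mulr0.
  have /eqP ax0 : ann a.
    apply: genmod_min Hann _ _ (Pk_sq _ Pa) => _ /asboolP[p [q [Pp Pq ->]]].
    rewrite /ann -mulrA; apply/negPn/negP => pqx.
    by apply: (no_wit p); exists (q * x); split=> //; apply: imsub_img.
  by rewrite ax0 eqxx in ax.
have /asboolP[b Pb ex] := L0_min _ PhiLx Lx_L0 x L0x.
have [u eu] := J_unit (Jpow_sub_J Pb).
have x0 : x = 0.
  by rewrite -[x]mul1r -eu -mulrA mulrBl mul1r {1}ex ?rmulE subrr mulr0.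
by rewrite x0 mulr0 eqxx in ax.
Qed.

Lemma layer_fin_spanned (B A : pred R^o) : lideal B -> lideal A -> subpred B A ->
  (forall j a, J j -> A a -> B (j * a)) ->
  exists s, all A s /\ subpred A (addsub B (lspan s)).
Proof.
move=> HB HA BA JAB.
pose Phi C := [/\ lideal C, subpred B C, subpred C A &
  exists s, all A s /\ subpred A (addsub C (lspan s))].
have [|C0 [[HC0 BC0 C0A [s0 [As0 A_C0s0]]] C0_min]] :=
    @dcc_min Phi (fun C '(And4 HC _ _ _) => HC).
  exists A; split=> //; exists [::]; split=> //; exact: addsubl (lspan_submod [::]).
have [C0B|/existsNP[c /not_implyP[C0c /negP Bc]]] := pselect (subpred C0 B).
  exists s0; split=> // a /A_C0s0 /asboolP[b [y [C0b sy ->]]].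
  exact: addsub_intro (C0B _ C0b) sy.
have [D [HD BD _ Dc D_max]] := submod_max_avoid HB (fun _ _ => isT) Bc.
have A_Dc : subpred A (adjoin D c).
  move=> a Aa; apply: (adjoin_of_interL_colon HD Dc _ max_ms).
    by move=> D' HD' DD'; apply: D_max.
  by move=> j Jj; apply: BD; apply: JAB.
pose C1 := predI D C0.
have PhiC1 : Phi C1.
  split; [exact: submodI | by move=> x Bx; rewrite /= BD ?BC0 | by move=> x /andP[_ /C0A] |].
  exists (c :: s0); split; first by rewrite /= C0A.
  move=> a /A_C0s0 /asboolP[b [y [C0b sy ->]]].
  have /adjoinP[d [r [Dd eb]]] := A_Dc _ (C0A _ C0b).
  have C1d : C1 d.
    by rewrite /= Dd -[d](addrK (r *: c)) -eb (submodB HC0) ?(submodZ HC0).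
  by rewrite eb -addrA; apply: (addsub_intro C1d); apply: lspan_cons.
have C1C0 : subpred C1 C0 by move=> x /andP[].
have /andP[Dc' _] := C0_min _ PhiC1 C1C0 c C0c.
by rewrite Dc' in Dc.
Qed.

Lemma noetherian_of_jacobson : left_noetherian R.
Proof.
move=> L HL; have [k Jk0] := Jpow_nil.
pose Li i := predI L (Jpow i).
have HLi i : lideal (Li i) := submodI HL (Jpow_lideal i).
have spanned_deep i : (k <= i)%N -> fin_spanned (Li i).
  by move=> ki; exists [::]; split=> // x /andP[_ /(Jpow_sub ki) /Jk0 ->] /=.
have spanned_step i : fin_spanned (Li i.+1) -> fin_spanned (Li i).
  move=> [t [Lt Lt_span]].
  have Li_succ : subpred (Li i.+1) (Li i).
    by move=> x /andP[Lx /Jpow_succ_sub Px]; rewrite /= Lx.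
  have [|s [Ls Ls_span]] := layer_fin_spanned (HLi i.+1) (HLi i) Li_succ.
    by move=> j a Jj /andP[La Pa]; rewrite /= (lidealM _ HL La) lmul_mul.
  exists (t ++ s); split; first by rewrite all_cat Ls andbT; apply: sub_all Lt.
  by move=> a /Ls_span /asboolP[b [y [Lb sy ->]]]; apply: lspan_cat (Lt_span _ Lb) sy.
have [s [Ls Ls_span]] : fin_spanned (Li 0).
  suff spanned_d d i : (k <= d + i)%N -> fin_spanned (Li i).
    by apply: (spanned_d k); rewrite addn0.
  by elim: d i => [|d IH] i; [apply: spanned_deep | rewrite addSnnS => /IH /spanned_step].
exists s; split; first by apply: sub_all Ls => x /andP[].
by move=> x Lx; apply: Ls_span; rewrite /= Lx.
Qed.

End Jacobson.

Theorem left_artinian_noetherian : left_noetherian R.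
Proof. by have [ms max_ms J_max] := jacobson_exists; apply: noetherian_of_jacobson J_max. Qed.

End LeftArtinian.

Section RadicalSocle.
Variable R : pzRingType.

Lemma soc_submod (N : lmodType R) : is_submod (@soc R N).
Proof. exact: genmod_submod. Qed.

Lemma rad_submod (A : lmodType R) : is_submod (@Defs.rad R A).
Proof.
split.
- by apply/asboolP => Q [HQ _ _]; apply: submod0.
- move=> x y /asboolP Hx /asboolP Hy; apply/asboolP => Q maxQ.
  by case: (maxQ) => HQ _ _; apply: (submodD HQ); [apply: Hx | apply: Hy].
- move=> a x /asboolP Hx; apply/asboolP => Q maxQ.
  by case: (maxQ) => HQ _ _; apply: (submodZ HQ); apply: Hx.
Qed.

(* The hypotheses say that the image of [h] is simple modulo [Q]. *)
Lemma maximal_preim (A N : lmodType R) (h : {linear A -> N}) (Q : pred N) (x : A) :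
  is_submod Q -> ~~ Q (h x) ->
  (forall a, adjoin Q (h x) (h a)) ->
  (forall a, ~~ Q (h a) -> adjoin Q (h a) (h x)) ->
  maximal_sub (preim h Q).
Proof.
move=> HQ Qhx hx_span hx_gen; split; [exact: submod_preim | by exists x |].
move=> N' HN' QN' [v N'v] w N'w; apply/negPn/negP => Qhw; case/negP: N'v.
have [q1 [s [Qq1 ehx]]] := adjoinP (hx_gen _ Qhw).
have [q2 [t [Qq2 ehv]]] := adjoinP (hx_span v).
have /QN' N'vw : preim h Q (v - (t * s) *: w).
  rewrite /= linearB linearZ /= ehv {1}ehx scalerDr scalerA addrA addrK.
  by rewrite (submodD HQ) ?(submodZ HQ).
by have := submodD HN' N'vw (submodZ HN' (t * s) N'w); rewrite subrK.
Qed.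

Lemma rad_map_soc (A N : lmodType R) (h : {linear A -> N}) :
  (forall a, @soc R N (h a)) -> forall x, @Defs.rad R A x -> h x = 0.
Proof.
move=> h_soc x radx; apply/eqP/negPn/negP => hx_neq0.
have Hsoc := soc_submod N; set y := h x in hx_neq0 *.
have zero_soc : subpred (pred1 0) (@soc R N) by move=> v /eqP->; apply: submod0.
have [Q [HQ _ Q_soc Qy Q_max]] := submod_max_avoid (pred1_0_submod N) zero_soc hx_neq0.
have soc_adjoin v : @soc R N v -> ~~ Q v -> adjoin Q v y.
  move=> socv Qv; apply/negPn/negP => Qvy.
  have HQv := addsub_submod HQ (cyclic_submod v).
  have Qv_soc := addsub_min Hsoc Q_soc (cyclic_min Hsoc socv).
  have := Q_max _ HQv (addsubl (cyclic_submod v)) Qv_soc Qvy v.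
  by move=> /(_ (addsubr HQ (cyclic_id v))); apply/negP.
have soc_sub : subpred (@soc R N) (adjoin Q y).
  apply: genmod_min (addsub_submod HQ (cyclic_submod y)) _.
  move=> w /asboolP[K [simK Kw]]; case: (simK) => HK [k [Kk k_neq0]] K_simple.
  have KQ_K : subpred (predI K Q) K by move=> z /andP[].
  have [KQ0|KQ] := K_simple _ (submodI HK HQ) KQ_K.
    have Qk : ~~ Q k by apply: contra k_neq0 => Qk; apply/eqP; apply: KQ0; rewrite /= Kk.
    have socK : subpred K (@soc R N).
      by move=> z Kz; apply: genmod_id; apply/asboolP; exists K; split.
    have [q [r [Qq ey]]] := adjoinP (soc_adjoin _ (socK _ Kk) Qk).
    have rk_neq0 : r *: k != 0 by apply: contra Qy => /eqP rk0; rewrite ey rk0 addr0.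
    have [rk0|K_rk] := K_simple _ (cyclic_submod (r *: k)) (cyclic_min HK (submodZ HK r Kk)).
      by rewrite (rk0 _ (cyclic_id _)) eqxx in rk_neq0.
    have /asboolP[t ->] := K_rk _ Kw.
    rewrite (_ : r *: k = y - q); last by rewrite ey addrC addKr.
    by rewrite scalerBr addrC; apply: adjoin_intro; rewrite (submodN HQ) ?(submodZ HQ).
  by have /andP[_ Qw] := KQ _ Kw; apply: adjoinl.
have max_preim := maximal_preim HQ Qy (fun a => soc_sub _ (h_soc a))
  (fun a => soc_adjoin _ (h_soc a)).
by move/asboolP: radx => /(_ _ max_preim); apply/negP.
Qed.

End RadicalSocle.

Section Preradicals.
Variable R : pzRingType.

Lemma natinf_min_le (P : nat -> Prop) n :
  P n -> exists2 m, natinf_min P = Some m & (m <= n)%N.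
Proof.
rewrite /natinf_min => Pn; case: pselect => [h|[]]; last by exists n.
by exists (ex_minn (ex_asbool_nat h)) => //; case: ex_minnP => m _; apply; apply/asboolP.
Qed.

Lemma natinf_minP (P : nat -> Prop) n : natinf_min P = Some n -> P n.
Proof. by rewrite /natinf_min; case: pselect => // h [<-]; case: ex_minnP => m /asboolP. Qed.

Lemma sval_linear (M : lmodType R) (S : pred M) : linear (fun u : subL S => sval u).
Proof. by []. Qed.

Definition svalL (M : lmodType R) (S : pred M) : {linear subL S -> M} :=
  mklin (@sval_linear M S).

Section Corestriction.
Variables (X Y : lmodType R) (f : {linear X -> Y}) (I : pred Y).
Hypothesis fI : forall x, genmod I (f x).

Definition corestr (x : X) : subL I := exist _ (f x) (fI x).

Lemma corestr_linear : linear corestr.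
Proof. by move=> a x y; apply: subT_inj; rewrite /= linearD linearZ. Qed.

Definition corestrL : {linear X -> subL I} := mklin corestr_linear.

End Corestriction.

Section Beta.
Unset Implicit Arguments.
Variable beta : forall M : lmodType R, pred M.
Set Implicit Arguments.
Hypotheses (pre_beta : preradical beta) (beta_mono : q_preserves_mono beta).

Lemma qmap_qpi (X Y : lmodType R) (f : {linear X -> Y}) : fg X -> fg Y ->
  forall x, @qmap R beta X Y f (qpi (beta X) x) = qpi (beta Y) (f x).
Proof.
move=> fgX fgY x; apply/qpiP; rewrite -linearB; apply: genmod_id.
apply: (proj2 pre_beta _ _ fgX fgY).
by rewrite -(genmodE _ (proj1 pre_beta _ fgX)); apply: qrepr_pi.
Qed.

Lemma beta_hereditary (X Y : lmodType R) (f : {linear X -> Y}) :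
  fg X -> fg Y -> injective f -> forall x, beta Y (f x) -> beta X x.
Proof.
move=> fgX fgY f_inj x bfx.
have HbX := proj1 pre_beta _ fgX; have HbY := proj1 pre_beta _ fgY.
apply/(qpi_eq0 _ HbX); rewrite -(linear0 (qpi (beta X))).
apply: (beta_mono fgX fgY f_inj); rewrite !qmap_qpi // linear0.
by rewrite (proj2 (qpi_eq0 _ HbY) bfx) linear0.
Qed.

Lemma in_T_qobj0 (M : lmodType R) :
  fg M -> in_T beta M <-> forall u : qobj beta M, u = 0.
Proof.
move=> fgM; have Hb := proj1 pre_beta _ fgM.
split=> [[_ bM]|qM0]; first by elim/qW => x; apply/(qpi_eq0 _ Hb).
by split=> // x; apply/(qpi_eq0 _ Hb).
Qed.

Fixpoint iterG_proj (M : lmodType R) (j : nat) : M -> iter j (Gobj beta) M :=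
  match j return M -> iter j (Gobj beta) M with
  | 0 => id
  | j'.+1 => fun x => qpi _ (qpi _ (@iterG_proj M j' x))
  end.

Lemma iterG_proj_linear (M : lmodType R) j : linear (@iterG_proj M j).
Proof. by elim: j => [//|j IH] a x y /=; rewrite IH !linearP. Qed.

Definition iterG_projL (M : lmodType R) j : {linear M -> iter j (Gobj beta) M} :=
  mklin (@iterG_proj_linear M j).

Lemma fg_iterG (M : lmodType R) j : fg M -> fg (iter j (Gobj beta) M).
Proof. by move=> fgM; elim: j => [//|j IH] /=; do 2!apply: fg_quot. Qed.

End Beta.

Section Alpha.
Unset Implicit Arguments.
Variable alpha : forall M : lmodType R, pred M.
Set Implicit Arguments.
Hypotheses (noethR : left_noetherian R) (pre_alpha : preradical alpha).

Fixpoint iterF_incl (M : lmodType R) (i : nat) : iter i (Fobj alpha) M -> M :=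
  match i return iter i (Fobj alpha) M -> M with
  | 0 => id
  | i'.+1 => fun x => @iterF_incl M i' (sval (sval x))
  end.

Lemma iterF_incl_linear (M : lmodType R) i : linear (@iterF_incl M i).
Proof. by elim: i => [//|i IH] a x y /=; rewrite -IH. Qed.

Lemma iterF_incl_inj (M : lmodType R) i : injective (@iterF_incl M i).
Proof. by elim: i => [//|i IH] x y /= /IH /subT_inj /subT_inj. Qed.

Definition iterF_inclL (M : lmodType R) i : {linear iter i (Fobj alpha) M -> M} :=
  mklin (@iterF_incl_linear M i).

Lemma fg_Fobj (M : lmodType R) : fg M -> fg (Fobj alpha M).
Proof.
move=> fgM; have fgA := fg_subL noethR fgM (proj1 pre_alpha _ fgM).
by apply: (fg_subL noethR fgA); apply: rad_submod.
Qed.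

Lemma fg_iterF (M : lmodType R) i : fg M -> fg (iter i (Fobj alpha) M).
Proof. by move=> fgM; elim: i => [//|i IH] /=; apply: fg_Fobj. Qed.

End Alpha.

Section Main.
Unset Implicit Arguments.
Variables (alpha beta : forall M : lmodType R, pred M).
Set Implicit Arguments.
Hypotheses (noethR : left_noetherian R) (pre_alpha : preradical alpha)
  (pre_beta : preradical beta) (beta_mono : q_preserves_mono beta).

Local Notation Gproj Y := (fun y => qpi (@soc R (qobj beta Y)) (qpi (beta Y) y)).

Lemma Fobj_beta (X Y : lmodType R) (f : {linear X -> Y}) : fg X -> fg Y ->
  (forall x, alpha X x -> Gproj Y (f x) = 0) ->
  forall z : Fobj alpha X, beta Y (f (sval (sval z))).
Proof.
move=> fgX fgY f_soc z.
have Hb := proj1 pre_beta _ fgY; have Ha := proj1 pre_alpha _ fgX.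
pose h := qpi (beta Y) \o f \o svalL (alpha X).
have h_soc w : @soc R (qobj beta Y) (h w).
  apply/(qpi_eq0 _ (@soc_submod _ _)); apply: f_soc.
  by rewrite -(genmodE _ Ha); apply: (svalP w).
have radz : @Defs.rad R _ (sval z).
  by rewrite -(genmodE _ (@rad_submod _ _)); apply: (svalP z).
exact/(qpi_eq0 _ Hb)/(rad_map_soc h_soc radz).
Qed.

Lemma in_F_of_ll_le :
  (forall M : lmodType R, fg M -> leinf (ll_up alpha M) (ll_low_q beta M)) ->
  forall M : lmodType R, in_T beta M -> in_F alpha M.
Proof.
move=> ll_le M T_M; have fgM := proj1 T_M; split=> //.
pose P i := forall u : qobj beta (iter i (Gobj beta) M), u = 0.
have [m e] := natinf_min_le (P := P) (n := 0) (proj1 (in_T_qobj0 pre_beta fgM) T_M).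
rewrite leqn0 => /eqP m0; move: (ll_le M fgM); rewrite /ll_low_q e m0.
case e_up : (ll_up alpha M) => [k|//] /=; rewrite leqn0 => /eqP k0.
by move: e_up; rewrite k0 => /natinf_minP.
Qed.

Hypothesis T_F : forall M : lmodType R, in_T beta M -> in_F alpha M.

Lemma alpha_Fobj_kernel (X Y : lmodType R) (f : {linear X -> Y}) : fg X -> fg Y ->
  (forall x, alpha X x -> Gproj Y (f x) = 0) ->
  forall z : Fobj alpha X, alpha _ z -> f (sval (sval z)) = 0.
Proof.
move=> fgX fgY f_soc.
have fgZ := fg_Fobj noethR pre_alpha fgX.
set Z := Fobj alpha X in fgZ *.
pose g := (f \o svalL (alpha X) \o svalL (@Defs.rad R (subL (alpha X))) : {linear Z -> Y}).
pose I := imsub g predT.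
have HI : is_submod I by apply: imsub_submod; split.
have fgW : fg (subL I) := fg_subL noethR fgY HI.
have T_W : in_T beta (subL I).
  split=> // w; apply: (@beta_hereditary beta pre_beta beta_mono _ _ (svalL I)) => //.
    by move=> u v /subT_inj.
  have /asboolP[z _ ez] : I (sval w) by rewrite -(genmodE _ HI); apply: (svalP w).
  have -> : svalL I w = g z by exact: ez.
  exact: (Fobj_beta fgX fgY f_soc z).
have [_ F_W] := T_F T_W.
have gI z : genmod I (g z) by apply: genmod_id; apply: imsub_img.
move=> z az; have := proj2 pre_alpha _ _ fgZ fgW (corestrL gI) z az.
by move=> /F_W /(congr1 sval).
Qed.

Lemma alpha_iterF_kernel (M : lmodType R) n : fg M ->
  (forall u : qobj beta (iter n (Gobj beta) M), u = 0) ->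
  forall i j, (i + j = n)%N -> forall x : iter i (Fobj alpha) M,
    alpha _ x -> iterG_proj beta j (iterF_incl x) = 0.
Proof.
move=> fgM qGn0; elim=> [|i IH] j eij x ax.
  rewrite add0n in eij; subst j.
  have fgGn := fg_iterG beta n fgM.
  have [_ F_Gn] := T_F (proj2 (in_T_qobj0 pre_beta fgGn) qGn0).
  exact/F_Gn/(proj2 pre_alpha _ _ fgM fgGn (iterG_projL beta M n) x ax).
have /IH IHj : (i + j.+1 = n)%N by rewrite addnS -addSn.
have := alpha_Fobj_kernel (f := iterG_projL beta M j \o iterF_inclL alpha M i)
  (fg_iterF noethR pre_alpha i fgM) (fg_iterG beta j fgM) IHj ax.
by [].
Qed.

Lemma ll_le_of_T_F (M : lmodType R) : fg M -> leinf (ll_up alpha M) (ll_low_q beta M).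
Proof.
move=> fgM; rewrite /ll_low_q; case e: natinf_min => [n|//].
have ker := alpha_iterF_kernel fgM (natinf_minP e) (addn0 n).
have [m -> //] : exists2 m, ll_up alpha M = Some m & (m <= n)%N.
apply: natinf_min_le => x ax; apply: (@iterF_incl_inj alpha M n).
by have /= -> := ker x ax; symmetry; apply: (linear0 (iterF_inclL alpha M n)).
Qed.

End Main.

End Preradicals.

Unset Implicit Arguments.
Set Strict Implicit.

Theorem theorem2p6 (R : pzRingType) (alpha beta : forall M : lmodType R, pred M) :
  left_artinian R ->
  preradical alpha -> preradical beta ->
  pr_idempotent alpha -> q_preserves_mono beta ->
  ((forall M : lmodType R, fg M -> leinf (ll_up alpha M) (ll_low_q beta M)) <->
   (forall M : lmodType R, in_T beta M -> in_F alpha M)).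
Proof.
move=> artR pre_alpha pre_beta _ beta_mono; split; first exact: in_F_of_ll_le.
exact: ll_le_of_T_F (left_artinian_noetherian artR) pre_alpha pre_beta beta_mono.
Qed.
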